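(* Let $X$ be a real Hilbert space, let $\alpha\in\mathbb{R}\setminus\{0\}$ and $\beta>0$, equip $X\times X\times\mathbb{R}$ with the norm $\|(x,y,\gamma)\|=\sqrt{\|x\|^2+\|y\|^2+\beta^2|\gamma|^2}$, and let $C_\alpha=\{(x,y,\gamma)\in X\times X\times\mathbb{R}:\langle x,y\rangle=\alpha\gamma\}$. Then: (i) $C_\alpha$ is closed; if $X$ is infinite-dimensional, then $C_\alpha$ is not weakly closed, and in fact its weak closure is $X\times X\times\mathbb{R}$. (ii) $C_\alpha$ is prox-regular in $X\times X\times\mathbb{R}$; hence, for every point of $C_\alpha$ there exists a neighborhood on which the projection mapping $P_{C_\alpha}$ is single-valued.
   Context: $P_S(z)=\operatorname{argmin}_{w\in S}\|w-z\|$. A closed set $S$ is prox-regular (in the sense of Poliquin–Rockafellar–Thibault) if at every point of $S$ it is prox-regular, i.e., there exist $\varepsilon,r>0$ such that for all $x\in S$ near the point and all proximal normals $v$ to $S$ at $x$ with $\|v\|<\varepsilon$, one has $\langle v,x'-x\rangle\leq \frac{r}{2}\|x'-x\|^2$ for all $x'\in S$ near the point. *)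

From mathcomp Require Import all_boot all_algebra all_classical all_reals all_analysis.
Import GRing.Theory Num.Theory.
Set Implicit Arguments. Unset Strict Implicit. Unset Printing Implicit Defensive.
Local Open Scope ring_scope.
Local Open Scope classical_set_scope.

Section Defs.
Variables (R : realType) (X : completeNormedModType R).

(* A real Hilbert space is a complete normed space whose norm comes from an
   inner product: [inner] is a symmetric bilinear form with <x,x> = |x|^2. *)
Definition is_inner_product (inner : X -> X -> R) : Prop :=
  [/\ forall x y, inner x y = inner y x,
      forall (a : R) (x y z : X), inner (a *: x + y) z = a * inner x z + inner y z
    & forall x, inner x x = `|x| ^+ 2].

Definition infinite_dimensional : Prop :=
  forall n : nat, exists v : 'I_n -> X,
    forall c : 'I_n -> R, \sum_(i < n) c i *: v i = 0 -> forall i, c i = 0.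

Variables (inner : X -> X -> R) (beta : R).

Definition trip := (X * X * R)%type.

Definition tsub (u v : trip) : trip := (u.1.1 - v.1.1, u.1.2 - v.1.2, u.2 - v.2).
Definition tadd (u v : trip) : trip := (u.1.1 + v.1.1, u.1.2 + v.1.2, u.2 + v.2).
Definition tscale (a : R) (u : trip) : trip := (a *: u.1.1, a *: u.1.2, a * u.2).

Definition tnorm (u : trip) : R :=
  Num.sqrt (`|u.1.1| ^+ 2 + `|u.1.2| ^+ 2 + beta ^+ 2 * `|u.2| ^+ 2).

Definition tinner (u v : trip) : R :=
  inner u.1.1 v.1.1 + inner u.1.2 v.1.2 + beta ^+ 2 * (u.2 * v.2).

Definition tdist (u v : trip) : R := tnorm (tsub u v).

Definition tclosed (S : set trip) : Prop :=
  forall z, (forall e : R, 0 < e -> exists2 c, S c & tdist z c < e) -> S z.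

Definition cont_linear_functional (f : trip -> R) : Prop :=
  (forall (a : R) (u v : trip), f (tadd (tscale a u) v) = a * f u + f v) /\
  (forall z (e : R), 0 < e -> exists2 d : R, 0 < d &
      forall w, tdist w z < d -> `|f w - f z| < e).

(* weak closure: z is in the weak closure of S iff every basic weak
   neighbourhood {w | |f_i w - f_i z| < e, i < n} of z meets S *)
Definition weak_closure (S : set trip) : set trip :=
  [set z | forall (n : nat) (f : 'I_n -> trip -> R) (e : R),
      (forall i, cont_linear_functional (f i)) -> 0 < e ->
      exists2 c, S c & forall i, `|f i c - f i z| < e].

Definition weakly_closed (S : set trip) : Prop := weak_closure S `<=` S.

Definition metric_proj (S : set trip) (z : trip) : set trip :=
  [set p | S p /\ forall w, S w -> tdist p z <= tdist w z].

Definition proximal_normal (S : set trip) (x v : trip) : Prop :=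
  exists2 t : R, 0 < t & metric_proj S (tadd x (tscale t v)) x.

(* Poliquin-Rockafellar-Thibault prox-regularity at xb *)
Definition prox_regular_at (S : set trip) (xb : trip) : Prop :=
  exists (eps r delta : R), [/\ 0 < eps, 0 < r, 0 < delta &
    forall x v x', S x -> tdist x xb < delta ->
      proximal_normal S x v -> tnorm v < eps ->
      S x' -> tdist x' xb < delta ->
      tinner v (tsub x' x) <= r / 2 * tnorm (tsub x' x) ^+ 2].

Definition prox_regular (S : set trip) : Prop :=
  tclosed S /\ forall xb, S xb -> prox_regular_at S xb.

End Defs.

Definition C_alpha (R : realType) (X : completeNormedModType R)
  (inner : X -> X -> R) (alpha : R) : set (X * X * R)%type :=
  [set u | inner u.1.1 u.1.2 = alpha * u.2].

(* Write F (x, y, g) = <x, y> - alpha g ([defect]), so that C_alpha = F^-1 (0).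
   F is locally Lipschitz, hence C_alpha is closed.  If X is infinite-dimensional,
   finitely many continuous functionals have a common nonzero kernel vector u;
   moving (x, y, g) along (u, s u, 0) keeps them fixed, while for a suitable sign
   s = +-1 the quadratic t |-> <x + t u, y + s t u> reaches alpha g.  So C_alpha
   is weakly dense.
   For p in P_C(z) the first-order condition reads z - p = k n(p), where
   n(p) = (p_y, p_x, -alpha / beta^2) ([normal_dir]) is the gradient of F for the
   inner product inducing the norm; and whenever z - p = k n(p) with p in
   C_alpha, every w in C_alpha satisfies
     ||w - z||^2 - ||p - z||^2 = ||w - p||^2 + 2 k <w_x - p_x, w_y - p_y>,
   which gives the prox-regularity inequality, and shows that p is the unique
   projection of z when |k| < 1.  Near C_alpha such a p exists ([normal_foot]):
   solving z = p + k n(p) for p turns the condition p in C_alpha into a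
   polynomial equation in k, which has a small root by the intermediate value
   theorem. *)

From Pilot Require Import Defs.
From mathcomp Require Import all_boot all_algebra all_classical all_reals all_analysis.
From mathcomp Require Import ring lra.
Import GRing.Theory Num.Theory order.Order.TTheory.
Set Implicit Arguments.
Unset Strict Implicit.
Unset Printing Implicit Defensive.

Local Open Scope ring_scope.
Local Open Scope classical_set_scope.

Section RealLemmas.
Variable R : rcfType.

Lemma vanishing_bound_eq0 (x K : R) :
  0 <= K -> (forall e, 0 < e -> `|x| <= e * (e + K)) -> x = 0.
Proof.
move=> K_ge0 x_le; apply/normr0_eq0/eqP; rewrite eq_le normr_ge0 andbT.
apply/ler_addgt0Pr => eps eps_gt0; rewrite add0r.
have den_gt0 : 0 < eps + K + 1 by lra.
set e := eps / (eps + K + 1).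
have e_gt0 : 0 < e by rewrite divr_gt0.
have e_le1 : e <= 1 by rewrite ler_pdivrMr //; lra.
have eK : e * (1 + K) <= eps by rewrite mulrAC ler_pdivrMr //; nra.
apply: le_trans (x_le e e_gt0) _; nra.
Qed.

Lemma quadratic_root (A B D : R) :
  0 < A -> 0 <= D -> exists t, A * t ^+ 2 + B * t = D.
Proof.
move=> A_gt0 D_ge0; have A_neq0 : A != 0 by rewrite gt_eqF.
have disc_ge0 : 0 <= B ^+ 2 + 4 * A * D.
  by have := sqr_ge0 B; have := mulr_ge0 (ltW A_gt0) D_ge0; lra.
exists ((- B + Num.sqrt (B ^+ 2 + 4 * A * D)) / (2 * A)).
have := sqr_sqrtr disc_ge0; set s := Num.sqrt _ => s2.
apply/eqP; rewrite -subr_eq0; apply/eqP.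
have -> : A * ((- B + s) / (2 * A)) ^+ 2 + B * ((- B + s) / (2 * A)) - D
    = (s ^+ 2 - (B ^+ 2 + 4 * A * D)) / (4 * A) by field.
by rewrite s2 subrr mul0r.
Qed.

Lemma quadratic_ge0_lin_eq0 (A K : R) :
  0 <= K -> (forall s, 0 <= s * A + s ^+ 2 * K) -> A = 0.
Proof.
move=> K_ge0 quad_ge0; have K1_gt0 : 0 < K + 1 by lra.
have := quad_ge0 (- A / (K + 1)).
have -> : - A / (K + 1) * A + (- A / (K + 1)) ^+ 2 * K = - (A / (K + 1)) ^+ 2.
  by field; rewrite gt_eqF.
rewrite oppr_ge0 => sqr_le0.
have /eqP : (A / (K + 1)) ^+ 2 = 0 by apply/eqP; rewrite eq_le sqr_le0 sqr_ge0.
by rewrite sqrf_eq0 mulf_eq0 invr_eq0 (gt_eqF K1_gt0) orbF => /eqP.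
Qed.

(* The equation is the condition of [normal_foot_in_C] on the parameter [k]. *)
Lemma swap_equation_root (P Q S m j : R) :
  0 <= S -> 0 < j -> j <= 1 / 2 ->
  j ^+ 2 * (`|P| + 2 * `|Q|) + `|P - Q| <= j * m / 2 ->
  exists2 k, `|k| <= j &
    P * (1 + k ^+ 2) - k * S = (Q + k * m) * (1 - k ^+ 2) ^+ 2.
Proof.
move=> S_ge0 j_gt0 j_le small.
pose phi : {poly R} :=
  (Q%:P + m%:P * 'X) * (1 - 'X ^+ 2) ^+ 2 - (P%:P * (1 + 'X ^+ 2) - S%:P * 'X).
have phiE k : phi.[k] = (Q + k * m) * (1 - k ^+ 2) ^+ 2 - (P * (1 + k ^+ 2) - k * S).
  by rewrite !hornerE /=; ring.
(* [phi.[+-j]] is [+-j m (1 - j^2)^2] up to terms that [small] bounds by [j m / 2] *)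
set E := j ^+ 2 * P + Q * j ^+ 2 * (2 - j ^+ 2).
have E_le : `|E| <= j ^+ 2 * (`|P| + 2 * `|Q|).
  have j2_ge0 : 0 <= j ^+ 2 := sqr_ge0 j.
  have j2_le2 : 0 <= 2 - j ^+ 2 by nra.
  apply: le_trans (ler_normD _ _) _.
  rewrite !normrM (gtr0_norm j_gt0) (ger0_norm j2_le2).
  by have := mulr_ge0 (normr_ge0 Q) (sqr_ge0 (j ^+ 2)); nra.
have sq_ge : 1 / 2 <= (1 - j ^+ 2) ^+ 2 by nra.
have jm_ge0 : 0 <= j * m by have := normr_ge0 (P - Q); have := normr_ge0 E; nra.
have phi_j : phi.[j] = (Q - P) - E + j * S + j * m * (1 - j ^+ 2) ^+ 2.
  by rewrite phiE /E; ring.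
have phi_Nj : phi.[- j] = (Q - P) - E - j * S - j * m * (1 - j ^+ 2) ^+ 2.
  by rewrite phiE /E; ring.
have /andP[E_lo E_hi] : - `|E| <= E <= `|E| by rewrite -ler_norml.
have /andP[PQ_lo PQ_hi] : - `|P - Q| <= P - Q <= `|P - Q| by rewrite -ler_norml.
have jS_ge0 : 0 <= j * S := mulr_ge0 (ltW j_gt0) S_ge0.
have sign_change : phi.[- j] <= 0 <= phi.[j].
  by rewrite phi_j phi_Nj; apply/andP; split; nra.
have Nj_le_j : - j <= j by lra.
have [k /andP[k_ge k_le] /rootP] := poly_ivt Nj_le_j sign_change.
rewrite phiE => /eqP; rewrite subr_eq0 => /eqP root_k.
by exists k; rewrite // ler_norml k_ge k_le.
Qed.

End RealLemmas.

Section CommonKernel.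
Variables (R : realType) (X : completeNormedModType R).

Lemma linear_combination_map (g : X -> R) :
  (forall (a : R) x y, g (a *: x + y) = a * g x + g y) ->
  forall N (c : 'I_N -> R) (v : 'I_N -> X),
  g (\sum_(k < N) c k *: v k) = \sum_(k < N) c k * g (v k).
Proof.
move=> g_lin; have g0 : g 0 = 0 by have := g_lin 1 0 0; rewrite scaler0 addr0 mul1r; lra.
elim=> [|N IH] c v; first by rewrite !big_ord0.
by rewrite !big_ord_recr /= addrC g_lin IH addrC.
Qed.

Lemma common_kernel_neq0 (n : nat) (g : 'I_n -> X -> R) :
  infinite_dimensional X ->
  (forall i (a : R) x y, g i (a *: x + y) = a * g i x + g i y) ->
  exists2 u : X, u != 0 & forall i, g i u = 0.
Proof.
move=> /(_ n.+1) [v v_free] g_lin.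
pose A : 'M[R]_(n.+1, n) := \matrix_(k, i) g i (v k).
have : kermx A != 0.
  by rewrite kermx_eq0 /row_free neq_ltn ltnS rank_leq_col.
case/rowV0Pn => c /sub_kermxP cA c_neq0.
exists (\sum_(k < n.+1) c 0 k *: v k).
  apply: contra c_neq0 => /eqP /v_free c0; apply/eqP/rowP => k.
  by rewrite c0 mxE.
move=> i; rewrite (linear_combination_map (g_lin i)).
transitivity ((c *m A) 0 i); last by rewrite cA mxE.
by rewrite mxE; apply: eq_bigr => k _; rewrite mxE.
Qed.

End CommonKernel.

Section InnerProduct.
Variables (R : realType) (X : completeNormedModType R) (inner : X -> X -> R).
Hypothesis inner_prod : is_inner_product inner.

Lemma innerC (x y : X) : inner x y = inner y x.
Proof. by case: inner_prod. Qed.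

Lemma innerZDl (a : R) x y z : inner (a *: x + y) z = a * inner x z + inner y z.
Proof. by case: inner_prod. Qed.

Lemma inner_sqr (x : X) : inner x x = `|x| ^+ 2.
Proof. by case: inner_prod. Qed.

Lemma inner0l (z : X) : inner 0 z = 0.
Proof. by have := innerZDl 1 0 0 z; rewrite scaler0 addr0 mul1r; lra. Qed.

Lemma innerDl (x y z : X) : inner (x + y) z = inner x z + inner y z.
Proof. by rewrite -[x]scale1r innerZDl mul1r scale1r. Qed.

Lemma innerZl (a : R) x z : inner (a *: x) z = a * inner x z.
Proof. by rewrite -[a *: x]addr0 innerZDl inner0l addr0. Qed.

Lemma innerBl (x y z : X) : inner (x - y) z = inner x z - inner y z.
Proof. by rewrite innerDl -scaleN1r innerZl mulN1r. Qed.

Lemma innerDr (x y z : X) : inner z (x + y) = inner z x + inner z y.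
Proof. by rewrite innerC innerDl !(innerC z). Qed.

Lemma innerZr (a : R) x z : inner z (a *: x) = a * inner z x.
Proof. by rewrite innerC innerZl innerC. Qed.

Lemma innerBr (x y z : X) : inner z (x - y) = inner z x - inner z y.
Proof. by rewrite innerC innerBl !(innerC z). Qed.

Lemma sqr_normD (u v : X) : `|u + v| ^+ 2 = `|u| ^+ 2 + 2 * inner u v + `|v| ^+ 2.
Proof. by rewrite -!inner_sqr innerDl !innerDr (innerC v u); ring. Qed.

Lemma sqr_normZ (a : R) (u : X) : `|a *: u| ^+ 2 = a ^+ 2 * `|u| ^+ 2.
Proof. by rewrite -!inner_sqr innerZl innerZr; ring. Qed.

Lemma cauchy_schwarz (u w : X) : `|inner u w| <= `|u| * `|w|.
Proof.
have [->|u_neq0] := eqVneq u 0; first by rewrite inner0l normr0 normr0 mul0r.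
have u2_gt0 : 0 < `|u| ^+ 2 by rewrite exprn_gt0 // normr_gt0.
set p := inner u w.
(* expand [0 <= |t u + w|^2] at the minimiser [t = - p / |u|^2] *)
have : 0 <= `|(- p / `|u| ^+ 2) *: u + w| ^+ 2 by rewrite exprn_ge0.
rewrite sqr_normD sqr_normZ innerZl -/p.
have -> : (- p / `|u| ^+ 2) ^+ 2 * `|u| ^+ 2 + 2 * (- p / `|u| ^+ 2 * p) + `|w| ^+ 2
    = `|w| ^+ 2 - p ^+ 2 / `|u| ^+ 2 by field; rewrite normr_eq0.
rewrite subr_ge0 ler_pdivrMr // -exprMn mulrC => p2_le.
by rewrite -(ler_pXn2r (_ : 0 < 2)%N) ?nnegrE ?mulr_ge0 // real_normK ?num_real.
Qed.

Lemma normr_inner_le (u w : X) : `|inner u w| <= (`|u| ^+ 2 + `|w| ^+ 2) / 2.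
Proof.
have := sqr_normD u w; have := sqr_normD u (- w).
rewrite -scaleN1r innerZr sqr_normZ.
have := exprn_ge0 2 (normr_ge0 (u + w)); have := exprn_ge0 2 (normr_ge0 (u + (-1) *: w)).
rewrite ler_norml; lra.
Qed.

Section ProductSpace.
Variable beta : R.
Hypothesis beta_gt0 : 0 < beta.
Local Notation trip := (trip X).
Local Notation tnorm := (tnorm beta).
Local Notation tinner := (tinner inner beta).
Local Notation tdist := (tdist beta).

Lemma sqr_tnorm (u : trip) :
  tnorm u ^+ 2 = `|u.1.1| ^+ 2 + `|u.1.2| ^+ 2 + beta ^+ 2 * u.2 ^+ 2.
Proof.
rewrite /Defs.tnorm real_normK ?num_real // sqr_sqrtr //.
by apply: addr_ge0; [apply: addr_ge0 | apply: mulr_ge0]; apply: sqr_ge0.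
Qed.

Lemma tnorm_ge0 (u : trip) : 0 <= tnorm u.
Proof. exact: sqrtr_ge0. Qed.

Lemma tinner_sqr (u : trip) : tinner u u = tnorm u ^+ 2.
Proof. by rewrite sqr_tnorm /tinner !inner_sqr. Qed.

Lemma tinnerC (u v : trip) : tinner u v = tinner v u.
Proof. by rewrite /tinner (innerC u.1.1) (innerC u.1.2) (mulrC u.2). Qed.

Lemma tinnerZl (a : R) (u v : trip) : tinner (tscale a u) v = a * tinner u v.
Proof. by rewrite /tinner /= !innerZl //; ring. Qed.

Lemma sqr_tnormD (u v : trip) :
  tnorm (tadd u v) ^+ 2 = tnorm u ^+ 2 + 2 * tinner u v + tnorm v ^+ 2.
Proof. by rewrite !sqr_tnorm /tinner /= !sqr_normD //; ring. Qed.

Lemma tdist_eq0 (u v : trip) : tdist u v = 0 -> u = v.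
Proof.
case: u v => [[x y] g] [[x' y'] g'] d0.
have := sqr_tnorm (tsub (x, y, g) (x', y', g')); rewrite [tnorm _]d0 expr0n /= => E.
have := sqr_ge0 `|x - x'|; have := sqr_ge0 `|y - y'|.
have : 0 <= beta ^+ 2 * (g - g') ^+ 2 by rewrite mulr_ge0 ?sqr_ge0.
move=> h3 h2 h1.
have /eqP : `|x - x'| ^+ 2 = 0 by lra.
rewrite sqrf_eq0 normr_eq0 subr_eq0 => /eqP ->.
have /eqP : `|y - y'| ^+ 2 = 0 by lra.
rewrite sqrf_eq0 normr_eq0 subr_eq0 => /eqP ->.
have /eqP : beta ^+ 2 * (g - g') ^+ 2 = 0 by lra.
by rewrite mulf_eq0 !sqrf_eq0 (gt_eqF beta_gt0) subr_eq0 => /eqP ->.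
Qed.

Lemma normr_fst_le_tnorm (u : trip) : `|u.1.1| <= tnorm u.
Proof.
rewrite -(ler_pXn2r (_ : 0 < 2)%N) ?nnegrE ?tnorm_ge0 // sqr_tnorm.
have := sqr_ge0 `|u.1.2|; have := mulr_ge0 (sqr_ge0 beta) (sqr_ge0 u.2); lra.
Qed.

Lemma normr_snd_le_tnorm (u : trip) : `|u.1.2| <= tnorm u.
Proof.
rewrite -(ler_pXn2r (_ : 0 < 2)%N) ?nnegrE ?tnorm_ge0 // sqr_tnorm.
have := sqr_ge0 `|u.1.1|; have := mulr_ge0 (sqr_ge0 beta) (sqr_ge0 u.2); lra.
Qed.

Lemma normr_thd_le_tnorm (u : trip) : beta * `|u.2| <= tnorm u.
Proof.
have beta_u2_ge0 : 0 <= beta * `|u.2| := mulr_ge0 (ltW beta_gt0) (normr_ge0 _).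
rewrite -(ler_pXn2r (_ : 0 < 2)%N) ?nnegrE ?tnorm_ge0 //.
rewrite sqr_tnorm exprMn (real_normK (num_real u.2)).
have := sqr_ge0 `|u.1.1|; have := sqr_ge0 `|u.1.2|; lra.
Qed.

Lemma tdistC (u v : trip) : tdist u v = tdist v u.
Proof. by rewrite /tdist /Defs.tnorm /= -!(opprB u.1.1) -(opprB u.1.2) -(opprB u.2) !normrN. Qed.

Lemma sqr_normr_le_tnorm (u : trip) : `|u.1.1| ^+ 2 + `|u.1.2| ^+ 2 <= tnorm u ^+ 2.
Proof. by rewrite sqr_tnorm lerDl mulr_ge0 // sqr_ge0. Qed.

Lemma sqr_tnormZ (a : R) (u : trip) : tnorm (tscale a u) ^+ 2 = a ^+ 2 * tnorm u ^+ 2.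
Proof. by rewrite -!tinner_sqr tinnerZl tinnerC tinnerZl; ring. Qed.

Lemma metric_proj_orthogonal (S : set trip) (z p d : trip) :
  metric_proj beta S z p -> (forall s, S (tadd p (tscale s d))) ->
  tinner d (tsub p z) = 0.
Proof.
move=> [_ p_min] line.
suff : 2 * tinner d (tsub p z) = 0 by lra.
apply: (quadratic_ge0_lin_eq0 (sqr_ge0 (tnorm d))) => s.
have := p_min _ (line s); rewrite /Defs.tdist.
rewrite -(ler_pXn2r (_ : 0 < 2)%N) ?nnegrE ?tnorm_ge0 //.
have -> : tsub (tadd p (tscale s d)) z = tadd (tscale s d) (tsub p z).
  by rewrite /tsub /tadd /=; congr (_, _, _); rewrite addrAC addrC.
rewrite sqr_tnormD sqr_tnormZ tinnerZl; lra.
Qed.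

Section SetC.
Variable alpha : R.
Hypothesis alpha_neq0 : alpha != 0.
Local Notation C := (C_alpha inner alpha).

Definition defect (u : trip) : R := inner u.1.1 u.1.2 - alpha * u.2.

Lemma defect_eq0P (u : trip) : C u <-> defect u = 0.
Proof. by rewrite /defect; split => [->|/eqP]; rewrite ?subrr // subr_eq0 => /eqP. Qed.

Definition defect_lip (v : trip) : R := `|v.1.1| + `|v.1.2| + `|alpha| / beta.

Lemma defect_lip_ge0 (v : trip) : 0 <= defect_lip v.
Proof.
have := divr_ge0 (normr_ge0 alpha) (ltW beta_gt0).
by have := normr_ge0 v.1.1; have := normr_ge0 v.1.2; rewrite /defect_lip; lra.
Qed.

Lemma defect_lipschitz (u v : trip) :
  `|defect u - defect v| <= tdist u v * (tdist u v + defect_lip v).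
Proof.
set d := tdist u v; have d_ge0 : 0 <= d := tnorm_ge0 _.
have du1 : `|u.1.1 - v.1.1| <= d := normr_fst_le_tnorm (tsub u v).
have du2 : `|u.1.2 - v.1.2| <= d := normr_snd_le_tnorm (tsub u v).
have du3 : `|alpha * (u.2 - v.2)| <= `|alpha| / beta * d.
  rewrite normrM -mulrA ler_wpM2l // mulrC ler_pdivlMr // mulrC.
  exact: normr_thd_le_tnorm (tsub u v).
have u2_le : `|u.1.2| <= `|v.1.2| + d.
  by rewrite -[u.1.2](subrK v.1.2) addrC (le_trans (ler_normD _ _)) // lerD2l.
have cs1 : `|inner (u.1.1 - v.1.1) u.1.2| <= d * (`|v.1.2| + d).
  exact: le_trans (cauchy_schwarz _ _) (ler_pM _ _ du1 u2_le).
have cs2 : `|inner v.1.1 (u.1.2 - v.1.2)| <= `|v.1.1| * d.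
  exact: le_trans (cauchy_schwarz _ _) (ler_wpM2l (normr_ge0 _) du2).
have -> : defect u - defect v = inner (u.1.1 - v.1.1) u.1.2
    + inner v.1.1 (u.1.2 - v.1.2) - alpha * (u.2 - v.2).
  by rewrite /defect innerBl innerBr; ring.
have := ler_normB (inner (u.1.1 - v.1.1) u.1.2 + inner v.1.1 (u.1.2 - v.1.2))
  (alpha * (u.2 - v.2)).
have := ler_normD (inner (u.1.1 - v.1.1) u.1.2) (inner v.1.1 (u.1.2 - v.1.2)).
by rewrite /defect_lip; nra.
Qed.

Lemma closed_C : tclosed beta C.
Proof.
move=> z near_z; apply/defect_eq0P.
apply: (vanishing_bound_eq0 (defect_lip_ge0 z)) => e e_gt0.
have [c /defect_eq0P Cc dzc] := near_z e e_gt0.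
have lip_ge0 := defect_lip_ge0 z; have dzc_ge0 : 0 <= tdist z c := tnorm_ge0 _.
have := defect_lipschitz c z; rewrite Cc sub0r normrN tdistC.
by move=> /le_trans; apply; nra.
Qed.

Lemma weak_closure_C : infinite_dimensional X -> weak_closure beta C = setT.
Proof.
move=> X_inf; apply/seteqP; split => // -[[x y] g] _ n f e f_cont e_gt0.
have f_lin i := proj1 (f_cont i).
have [s s2 s_ge0] : exists2 s : R, s ^+ 2 = 1 & 0 <= s * (alpha * g - inner x y).
  have [le_xy|lt_xy] := lerP (inner x y) (alpha * g).
    by exists 1; rewrite ?expr1n ?mul1r ?subr_ge0.
  by exists (-1); rewrite ?sqrrN ?expr1n // mulN1r oppr_ge0 subr_le0 ltW.
pose dir (w : X) : trip := (w, s *: w, 0).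
have dir_lin (a : R) w w' : dir (a *: w + w') = tadd (tscale a (dir w)) (dir w').
  by rewrite /dir /tadd /tscale /= scalerDr !scalerA mulrC mulr0 addr0.
have [u u_neq0 fu] : exists2 u, u != 0 & forall i, f i (dir u) = 0.
  apply: (common_kernel_neq0 (g := fun i w => f i (dir w))) => // i a w w'.
  by rewrite dir_lin f_lin.
have u2_gt0 : 0 < `|u| ^+ 2 by rewrite exprn_gt0 // normr_gt0.
have [t t_root] := quadratic_root (inner x u + s * inner u y) u2_gt0 s_ge0.
exists (tadd (tscale t (dir u)) (x, y, g)); last first.
  by move=> i; rewrite f_lin fu mulr0 add0r subrr normr0.
rewrite /C_alpha /tadd /tscale /= innerDl !innerDr !innerZl !innerZr inner_sqr.
apply/eqP; rewrite -subr_eq0; apply/eqP.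
transitivity (s * (`|u| ^+ 2 * t ^+ 2 + (inner x u + s * inner u y) * t
    - s * (alpha * g - inner x y)) + (1 - s ^+ 2) * (t * inner u y - (alpha * g - inner x y))).
  by ring.
by rewrite t_root s2 subrr; ring.
Qed.

Definition normal_dir (u : trip) : trip := (u.1.2, u.1.1, - alpha / beta ^+ 2).

Lemma tinner_normal_dir (p w : trip) : C p -> C w ->
  tinner (normal_dir p) (tsub w p) = - inner (w.1.1 - p.1.1) (w.1.2 - p.1.2).
Proof.
move=> Cp Cw; rewrite /tinner /=.
have -> : beta ^+ 2 * (- alpha / beta ^+ 2 * (w.2 - p.2))
    = - (inner w.1.1 w.1.2 - inner p.1.1 p.1.2).
  by rewrite Cp Cw; field; rewrite gt_eqF.
by rewrite !innerBl !innerBr !(innerC p.1.2); ring.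
Qed.

Lemma metric_proj_C_normal (z p : trip) : metric_proj beta C z p ->
  tsub z p = tscale (beta ^+ 2 * (p.2 - z.2) / alpha) (normal_dir p).
Proof.
move=> proj; have [Cp _] := proj; set k := _ / alpha.
have residual_eq0 (r : X) (d : trip) : (forall s, C (tadd p (tscale s d))) ->
    tinner d (tsub p z) = - `|r| ^+ 2 -> r = 0.
  move=> line; rewrite (metric_proj_orthogonal proj line) => /eqP.
  by rewrite eq_sym oppr_eq0 sqrf_eq0 normr_eq0 => /eqP.
have e1 : z.1.1 - p.1.1 = k *: p.1.2.
  apply/eqP; rewrite -subr_eq0; apply/eqP.
  set r := _ - _ - _; apply: (residual_eq0 r (r, 0, inner r p.1.2 / alpha)).
    move=> s; rewrite /C_alpha /tadd /tscale /= scaler0 addr0 innerDl innerZl Cp.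
    by field.
  have rr : inner r r = inner r (z.1.1 - p.1.1) - k * inner r p.1.2.
    by rewrite /r !(innerBl, innerBr, innerZl, innerZr); ring.
  by rewrite /tinner /= inner0l -inner_sqr rr !innerBr /k; field.
have e2 : z.1.2 - p.1.2 = k *: p.1.1.
  apply/eqP; rewrite -subr_eq0; apply/eqP.
  set r := _ - _ - _; apply: (residual_eq0 r (0, r, inner p.1.1 r / alpha)).
    move=> s; rewrite /C_alpha /tadd /tscale /= scaler0 addr0 innerDr innerZr Cp.
    by field.
  have rr : inner r r = inner r (z.1.2 - p.1.2) - k * inner r p.1.1.
    by rewrite /r !(innerBl, innerBr, innerZl, innerZr); ring.
  by rewrite /tinner /= inner0l -inner_sqr rr (innerC p.1.1) !innerBr /k; field.
rewrite /tsub /tscale /normal_dir /= e1 e2; congr (_, _, _).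
by rewrite /k; field; rewrite gt_eqF.
Qed.

Lemma proximal_normal_C (x v : trip) : proximal_normal beta C x v ->
  v = tscale (- beta ^+ 2 * v.2 / alpha) (normal_dir x).
Proof.
case: x v => [[x1 x2] x3] [[v1 v2] v3] [t t_gt0 /metric_proj_C_normal].
rewrite /tsub /tadd /tscale /normal_dir /= (addrAC x1) (addrAC x2) (addrAC x3).
rewrite !subrr !add0r => -[e1 e2 _]; have t_neq0 : t != 0 by rewrite gt_eqF.
congr (_, _, _).
- by apply: (scalerI t_neq0); rewrite e1 scalerA; congr (_ *: _); field.
- by apply: (scalerI t_neq0); rewrite e2 scalerA; congr (_ *: _); field.
- by field; rewrite gt_eqF.
Qed.

Lemma prox_regular_C : prox_regular inner beta C.
Proof.
split; first exact: closed_C.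
move=> xb _; have alpha_gt0 : 0 < `|alpha| by rewrite normr_gt0.
exists 1, (beta / `|alpha|), 1; split => //; first by rewrite divr_gt0.
move=> x v x' Cx _ /proximal_normal_C v_normal v_lt1 Cx' _.
set lam := - beta ^+ 2 * v.2 / alpha in v_normal.
set D := tsub x' x.
have -> : tinner v D = - lam * inner D.1.1 D.1.2.
  by rewrite v_normal tinnerZl (tinner_normal_dir Cx Cx'); ring.
have lam_le : `|lam| <= beta / `|alpha|.
  have -> : `|lam| = beta / `|alpha| * (beta * `|v.2|).
    by rewrite /lam !normrM normrN normfV normrX (gtr0_norm beta_gt0); field; rewrite gt_eqF.
  rewrite ger_pMr ?divr_gt0 //.
  by have := normr_thd_le_tnorm v; lra.
apply: le_trans (ler_norm _) _; rewrite normrM normrN.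
apply: le_trans (ler_pM (normr_ge0 _) (normr_ge0 _) lam_le (normr_inner_le _ _)) _.
rewrite -mulrA; apply: ler_wpM2l; first by rewrite divr_ge0 ?ltW.
by have := sqr_normr_le_tnorm D; lra.
Qed.

Lemma metric_proj_C_unique (z p : trip) (k : R) :
  C p -> `|k| < 1 -> tsub z p = tscale k (normal_dir p) ->
  metric_proj beta C z p /\ forall q, metric_proj beta C z q -> q = p.
Proof.
move=> Cp k_lt1 zp_normal.
have excess w : C w ->
    (1 - `|k|) * tdist w p ^+ 2 <= tdist w z ^+ 2 - tdist p z ^+ 2.
  move=> Cw; rewrite /Defs.tdist; set D := tsub w p.
  have -> : tsub w z = tadd D (tsub p z).
    by rewrite /D /tsub /tadd /=; congr (_, _, _); rewrite addrA subrK.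
  have -> : tsub p z = tscale (- k) (normal_dir p).
    case: zp_normal => e1 e2 e3; rewrite /tsub /tscale; congr (_, _, _).
    - by rewrite -opprB e1 scaleNr.
    - by rewrite -opprB e2 scaleNr.
    - by rewrite /normal_dir /= mulNr -e3 opprB.
  rewrite sqr_tnormD tinnerC tinnerZl (tinner_normal_dir Cp Cw).
  rewrite -[inner (w.1.1 - _) _]/(inner D.1.1 D.1.2); set I := inner _ _.
  have := normr_inner_le D.1.1 D.1.2; have := sqr_normr_le_tnorm D.
  have := ler_norm (- (k * I)); rewrite normrN normrM.
  have := normr_ge0 I; have := normr_ge0 k; nra.
have tdist_ge0 u v : 0 <= tdist u v := tnorm_ge0 _.
have p_proj : metric_proj beta C z p.
  split => // w Cw; rewrite -(ler_pXn2r (_ : 0 < 2)%N) ?nnegrE //.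
  by have := excess w Cw; have := sqr_ge0 (tdist w p); nra.
split => // q [Cq q_min]; apply: tdist_eq0.
have := excess q Cq; have := q_min p Cp.
rewrite -(ler_pXn2r (_ : 0 < 2)%N) ?nnegrE // => le_qz le_excess.
apply/eqP; rewrite -sqrf_eq0 eq_le sqr_ge0 andbT.
by have := sqr_ge0 (tdist q p); nra.
Qed.

Definition normal_foot (k : R) (z : trip) : trip :=
  ((1 - k ^+ 2)^-1 *: (z.1.1 - k *: z.1.2), (1 - k ^+ 2)^-1 *: (z.1.2 - k *: z.1.1),
   z.2 + k * alpha / beta ^+ 2).

Lemma normal_foot_normal (k : R) (z : trip) : k ^+ 2 != 1 ->
  tsub z (normal_foot k z) = tscale k (normal_dir (normal_foot k z)).
Proof.
move=> k2_neq1; have k2_neq0 : 1 - k ^+ 2 != 0 by rewrite subr_eq0 eq_sym.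
have comp (a b : X) : a - (1 - k ^+ 2)^-1 *: (a - k *: b)
    = k *: ((1 - k ^+ 2)^-1 *: (b - k *: a)).
  apply: (scalerI k2_neq0).
  rewrite scalerBr !scalerA mulfV // scale1r mulrAC mulfV // mul1r.
  rewrite scalerBl scale1r scalerBr scalerA -expr2.
  by rewrite opprB addrC addrA subrK.
rewrite /tsub /tscale /normal_dir /normal_foot /=; congr (_, _, _); rewrite ?comp //.
by field; rewrite gt_eqF.
Qed.

Lemma normal_foot_in_C (k : R) (z : trip) : k ^+ 2 != 1 ->
  inner z.1.1 z.1.2 * (1 + k ^+ 2) - k * (`|z.1.1| ^+ 2 + `|z.1.2| ^+ 2)
    = (alpha * z.2 + k * (alpha ^+ 2 / beta ^+ 2)) * (1 - k ^+ 2) ^+ 2 ->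
  C (normal_foot k z).
Proof.
move=> k2_neq1 root_k; have k2_neq0 : 1 - k ^+ 2 != 0 by rewrite subr_eq0 eq_sym.
rewrite /C_alpha /normal_foot /= innerZl innerZr !innerBl !innerBr !innerZl !innerZr.
rewrite !inner_sqr (innerC z.1.2).
apply: (mulIf (expf_neq0 2 k2_neq0)).
transitivity (inner z.1.1 z.1.2 * (1 + k ^+ 2) - k * (`|z.1.1| ^+ 2 + `|z.1.2| ^+ 2)).
  by field.
by rewrite root_k; field; rewrite gt_eqF.
Qed.

Lemma defect_small_near (xb : trip) (eps : R) : C xb -> 0 < eps ->
  exists2 delta, 0 < delta <= 1 &
    forall z, tdist z xb < delta -> `|defect z| <= eps.
Proof.
move=> /defect_eq0P Cxb eps_gt0; have L_ge0 := defect_lip_ge0 xb.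
exists (Num.min 1 (eps / (1 + defect_lip xb))).
  by rewrite lt_min ltr01 divr_gt0 //=; [rewrite ge_min lexx | lra].
move=> z; rewrite lt_min ltr_pdivlMr; last by lra.
case/andP=> d_lt1 d_lt; have d_ge0 : 0 <= tdist z xb := tnorm_ge0 _.
have := defect_lipschitz z xb; rewrite Cxb subr0.
by move/le_trans; apply; nra.
Qed.

Lemma metric_proj_C_near (xb : trip) : C xb -> exists2 delta, 0 < delta &
  forall z, tdist z xb < delta ->
    exists p, metric_proj beta C z p /\ forall q, metric_proj beta C z q -> q = p.
Proof.
move=> Cxb; set m := alpha ^+ 2 / beta ^+ 2.
have m_gt0 : 0 < m by apply: divr_gt0; rewrite exprn_even_gt0 //= ?alpha_neq0 ?gt_eqF.
set Q0 := `|alpha| * (`|xb.2| + 1 / beta).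
have Q0_ge0 : 0 <= Q0.
  by rewrite mulr_ge0 // addr_ge0 // divr_ge0 // ltW.
set B := m + 3 * Q0.
have B_ge0 : 0 <= B by rewrite /B; lra.
set j := m / (4 * (B + m)).
have j_gt0 : 0 < j by apply: divr_gt0; lra.
have j_le : j <= 1 / 4 by rewrite ler_pdivrMr; lra.
have jB : j * B <= m / 4 by rewrite /j mulrAC ler_pdivrMr; [nra | lra].
have jm_gt0 : 0 < j * m / 4 by apply: divr_gt0 => //; exact: mulr_gt0.
have [delta /andP[delta_gt0 delta_le1] small] := defect_small_near Cxb jm_gt0.
exists delta => // z d_lt.
have Q_le : `|alpha * z.2| <= Q0.
  rewrite normrM ler_wpM2l // -[z.2](subrK xb.2) addrC (le_trans (ler_normD _ _)) //.
  rewrite lerD2l ler_pdivlMr // mulrC.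
  by have := normr_thd_le_tnorm (tsub z xb); rewrite -/(tdist z xb); lra.
have PQ_le : `|inner z.1.1 z.1.2 - alpha * z.2| <= j * m / 4 by apply: small.
have P_le : `|inner z.1.1 z.1.2| <= j * m / 4 + `|alpha * z.2|.
  by rewrite -[inner _ _](subrK (alpha * z.2)) (le_trans (ler_normD _ _)) // lerD2r.
have S_ge0 : 0 <= `|z.1.1| ^+ 2 + `|z.1.2| ^+ 2 := addr_ge0 (sqr_ge0 _) (sqr_ge0 _).
have j_le_half : j <= 1 / 2 by lra.
have small_data : j ^+ 2 * (`|inner z.1.1 z.1.2| + 2 * `|alpha * z.2|)
    + `|inner z.1.1 z.1.2 - alpha * z.2| <= j * m / 2.
  have jm_le : j * m / 4 <= m by nra.
  have PQB : `|inner z.1.1 z.1.2| + 2 * `|alpha * z.2| <= B by rewrite /B; lra.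
  have := ler_wpM2l (ltW j_gt0) (ler_wpM2l (ltW j_gt0) PQB).
  have := ler_wpM2l (ltW j_gt0) jB.
  by rewrite expr2 -mulrA; lra.
have [k k_le root_k] := swap_equation_root S_ge0 j_gt0 j_le_half small_data.
have k_lt1 : `|k| < 1 by lra.
have k2_neq1 : k ^+ 2 != 1.
  by rewrite -(real_normK (num_real k)) lt_eqF //; have := normr_ge0 k; nra.
exists (normal_foot k z).
exact: metric_proj_C_unique (normal_foot_in_C k2_neq1 root_k) k_lt1 (normal_foot_normal z k2_neq1).
Qed.

End SetC.

End ProductSpace.

End InnerProduct.

Theorem mainTheorem4 (R : realType) (X : completeNormedModType R)
  (inner : X -> X -> R) (alpha beta : R) :
  is_inner_product inner -> alpha != 0 -> 0 < beta ->
  let C := C_alpha inner alpha in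
  (tclosed beta C /\
   (infinite_dimensional X ->
      ~ weakly_closed beta C /\ weak_closure beta C = setT)) /\
  (prox_regular inner beta C /\
   forall xb, C xb -> exists2 delta : R, 0 < delta &
     forall z, tdist beta z xb < delta ->
       exists p, metric_proj beta C z p /\ forall q, metric_proj beta C z q -> q = p).
Proof.
move=> inner_prod alpha_neq0 beta_gt0 C; split; split.
- exact: closed_C.
- move=> X_inf; have weakC : weak_closure beta C = setT by exact: weak_closure_C.
  split => // C_weakly_closed.
  have : C (0, 0, 1) by apply: C_weakly_closed; rewrite weakC.
  rewrite /C /C_alpha /= inner0l // mulr1 => /esym/eqP.
  by rewrite (negbTE alpha_neq0).
- exact: prox_regular_C.
- exact: metric_proj_C_near.
Qed.
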